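(* Let $u,v$ be two finite words over $A_q$ and let $n,m,i,j\in\mathbb{N}$. If $n\xrightarrow{u} m$ is a path in $\mathcal{T}_{p/q}$ and $i\xrightarrow{u|v} j$ is a path in $\mathcal{D}_{p/q}$ (reading input $u$, producing output $v$), then $(n+i+1)\xrightarrow{v}(m+j+1)$ is a path in $\mathcal{T}_{p/q}$.
   Context: Let $p>q>1$ be coprime integers, $A_p=\{0,\dots,p-1\}$, $A_q=\{0,\dots,q-1\}$ and $B=\{p-(2q-1),\dots,p-1\}$. For $n\in\mathbb{N}$ and $a\in\mathbb{Z}$, let $\tau(n,a)=\frac{np+a}{q}$, defined only when $q$ divides $np+a$. Let $\mathcal{T}_{p/q}$ be the deterministic automaton with state set $\mathbb{N}$, alphabet $A_p$, and transitions $n\xrightarrow{a}\tau(n,a)$ for $a\in A_p$ with $\tau(n,a)$ defined. For $a\in B$ let $\omega(a)=\{(b,c)\in A_q\times A_q : c-b=a-(p-q)\}$. The transducer $\mathcal{D}_{p/q}$ has state set $\mathbb{N}$, input and output alphabet $A_q$, and a transition $n\xrightarrow{b|c}\tau(n,a)$ (input $b$, output $c$) for every $n\in\mathbb{N}$, $a\in B$ with $\tau(n,a)$ defined, and $(b,c)\in\omega(a)$; no other transitions. Paths are concatenations of transitions, with labels concatenated. *)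

From mathcomp Require Import all_boot all_order all_algebra.
Set Implicit Arguments. Unset Strict Implicit. Unset Printing Implicit Defensive.
Import Order.TTheory GRing.Theory Num.Theory.


Definition Tstep (p q n a m : nat) : Prop :=
  [/\ a < p, q %| n * p + a & m = (n * p + a) %/ q].

Fixpoint Tpath (p q n : nat) (u : seq nat) (m : nat) : Prop :=
  match u with
  | [::] => n = m
  | a :: u' => exists n', Tstep p q n a n' /\ Tpath p q n' u' m
  end.

Local Open Scope ring_scope.

Definition inB (p q : nat) (a : int) : Prop :=
  (p%:Z - (2 * q%:Z - 1) <= a) /\ (a <= p%:Z - 1)%R.

(* One transition of D_{p/q}: n --b|c--> m iff there is a \in B with
   tau(n,a) defined and equal to m (a natural number), and (b,c) \in omega(a). *)
Definition Dstep (p q n b c m : nat) : Prop :=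
  exists a : int,
    [/\ inB p q a,
        (q%:Z %| n%:Z * p%:Z + a)%Z,
        m%:Z = ((n%:Z * p%:Z + a) %/ q%:Z)%Z &
        ((b < q)%N /\ (c < q)%N /\ (c%:Z - b%:Z = a - (p%:Z - q%:Z))%R)].

Local Close Scope ring_scope.

Fixpoint Dpath (p q i : nat) (u v : seq nat) (j : nat) : Prop :=
  match u, v with
  | [::], [::] => i = j
  | b :: u', c :: v' => exists i', Dstep p q i b c i' /\ Dpath p q i' u' v' j
  | _, _ => False
  end.

From mathcomp Require Import all_boot all_order all_algebra.
From mathcomp Require Import zify.

(* If [n p + b = n' q] and [i p + a = i' q] with [c - b = a - (p - q)], then
   adding the two equations gives [(n + i + 1) p + c = (n' + i' + 1) q]: one
   transition of T and one of D sum to a transition of T on the output letter. *)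

Lemma Tstep_add_Dstep (p q : nat) (q_lt_p : q < p) (n b n' i c i' : nat) :
  Tstep p q n b n' -> Dstep p q i b c i' ->
  Tstep p q (n + i + 1) c (n' + i' + 1).
Proof.
move=> [_ dvd_nb ->] [a [_ dvd_ia def_i' [_ [c_lt_q def_c]]]].
have def_ia := divzK dvd_ia; rewrite -def_i' in def_ia.
have def_nb := divnK dvd_nb.
set n'' := (n * p + b) %/ q in def_nb *.
have sum_eq : (n + i + 1) * p + c = (n'' + i' + 1) * q by lia.
split.
- lia.
- by rewrite sum_eq dvdn_mull.
- by rewrite sum_eq mulnK //; lia.
Qed.

Theorem mainTheorem5 (p q : nat) (Hq : 1 < q) (Hqp : q < p) (Hcop : coprime p q)
  (u v : seq nat) (Hu : all (fun a => a < q) u) (Hv : all (fun a => a < q) v)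
  (n m i j : nat) :
  Tpath p q n u m -> Dpath p q i u v j -> Tpath p q (n + i + 1) v (m + j + 1).
Proof.
elim: u v n i {Hu Hv} => [|b u IH] [|c v] n i //=.
- by move=> -> ->.
move=> [n' [Tn Tpath_n']] [i' [Di Dpath_i']].
exists (n' + i' + 1); split; first exact: Tstep_add_Dstep Tn Di.
exact: IH.
Qed.
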